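(* Let $n\ge1$, let $\preceq$ be an admissible order on $L([0,1])$, let $F\colon L([0,1])\times L([0,1])\to L([0,1])$, $G\colon L([0,1])^n\to L([0,1])$ be functions and let $m\colon 2^N\to L([0,1])$ be an IV fuzzy measure with respect to $\preceq$. Then: (i) if $F$ is non-decreasing in the second variable, the triplet $(m,F,\vee)$ satisfies Condition (WDS) for any $m$; (ii) if $G=f\circ \mathrm{Proj}_1$ or $G=f\circ\vee$ for some function $f\colon L([0,1])\to L([0,1])$, then the triplet $(m,\wedge,G)$ satisfies Condition (WDS) for any $m$; (iii) the triplet $(m,\wedge,\vee)$ satisfies Condition (WDS) for any $m$.
   Context: $N=\{1,\dots,n\}$. $L([0,1])=\{[a,b]: 0\le a\le b\le 1\}$, $\mathbf 0=[0,0]$, $\mathbf 1=[1,1]$. $[a,b]\le_{spo}[c,d]$ iff $a\le c$ and $b\le d$. An admissible order $\preceq$ on $L([0,1])$ is a total order such that $X\le_{spo}Y$ implies $X\preceq Y$. $\vee$ and $\wedge$ denote maximum and minimum with respect to $\preceq$ (as $n$-ary or binary functions on $L([0,1])$). An IV fuzzy measure w.r.t. $\preceq$ is $m\colon 2^N\to L([0,1])$ with $m(\emptyset)=\mathbf 0$, $m(N)=\mathbf 1$, $m(A)\preceq m(B)$ for $A\subseteq B$. $\mathrm{Proj}_1(X_1,\dots,X_n)=X_1$. Monotonicity is w.r.t. $\preceq$. For a permutation $\sigma$ of $N$, $E_{\sigma(i)}=\{\sigma(i),\dots,\sigma(n)\}$. A triplet $(m,F,G)$ satisfies Condition (WDS)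 if for all $X_1,\dots,X_n\in L([0,1])$ and all permutations $\sigma_1,\sigma_2$ of $N$ with $X_{\sigma_j(1)}\preceq\dots\preceq X_{\sigma_j(n)}$ ($j=1,2$) one has $G\big(F(X_{\sigma_1(1)},m(E_{\sigma_1(1)})),\dots,F(X_{\sigma_1(n)},m(E_{\sigma_1(n)}))\big)=G\big(F(X_{\sigma_2(1)},m(E_{\sigma_2(1)})),\dots,F(X_{\sigma_2(n)},m(E_{\sigma_2(n)}))\big)$. *)

From HB Require Import structures.
From mathcomp Require Import all_boot all_order all_algebra all_fingroup.
From mathcomp Require Import reals.
Set Implicit Arguments. Unset Strict Implicit. Unset Printing Implicit Defensive.
Import Order.TTheory GRing.Theory Num.Theory.
Local Open Scope ring_scope.

Record IV (R : realType) := mkIV {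
  lo : R; hi : R;
  ivP : (0 <= lo) && (lo <= hi) && (hi <= 1) }.

Lemma iv0P (R : realType) : (0 <= (0:R)) && (0 <= (0:R)) && ((0:R) <= 1).
Proof. by rewrite lexx ler01. Qed.
Lemma iv1P (R : realType) : (0 <= (1:R)) && (1 <= (1:R)) && ((1:R) <= 1).
Proof. by rewrite lexx ler01. Qed.

Definition iv0 (R : realType) : IV R := mkIV (iv0P R).
Definition iv1 (R : realType) : IV R := mkIV (iv1P R).

Definition le_spo (R : realType) (X Y : IV R) : Prop :=
  lo X <= lo Y /\ hi X <= hi Y.

Definition admissible (R : realType) (le : IV R -> IV R -> bool) : Prop :=
  [/\ (forall X, le X X),
      (forall X Y, le X Y -> le Y X -> X = Y),
      (forall X Y Z, le X Y -> le Y Z -> le X Z),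
      (forall X Y, le X Y || le Y X) &
      (forall X Y, le_spo X Y -> le X Y)].

Definition ivmax (R : realType) (le : IV R -> IV R -> bool) (X Y : IV R) : IV R :=
  if le X Y then Y else X.
Definition ivmin (R : realType) (le : IV R -> IV R -> bool) (X Y : IV R) : IV R :=
  if le X Y then X else Y.

(* n-ary maximum w.r.t. le (iv0 is the least element of any admissible order,
   so for n >= 1 this is the maximum of X_1, ..., X_n) *)
Definition ivmaxn (R : realType) (le : IV R -> IV R -> bool) (n : nat)
  (X : 'I_n -> IV R) : IV R :=
  foldr (ivmax le) (iv0 R) [seq X i | i <- enum 'I_n].

(* Proj_1 (X_1,...,X_n) = X_1 (index 0 in 'I_n); default iv0 when n = 0 *)
Definition Proj1 (R : realType) (n : nat) (X : 'I_n -> IV R) : IV R :=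
  match [pick i : 'I_n | val i == 0%N] with Some i => X i | None => iv0 R end.

Definition iv_fuzzy_measure (R : realType) (le : IV R -> IV R -> bool) (n : nat)
  (m : {set 'I_n} -> IV R) : Prop :=
  [/\ m set0 = iv0 R, m setT = iv1 R &
      (forall A B : {set 'I_n}, A \subset B -> le (m A) (m B))].

Definition Eset (n : nat) (s : {perm 'I_n}) (i : 'I_n) : {set 'I_n} :=
  [set s j | j : 'I_n & (i <= j)%N].

Definition sorted_by (R : realType) (le : IV R -> IV R -> bool) (n : nat)
  (X : 'I_n -> IV R) (s : {perm 'I_n}) : Prop :=
  forall i j : 'I_n, (i <= j)%N -> le (X (s i)) (X (s j)).

Definition WDS (R : realType) (le : IV R -> IV R -> bool) (n : nat)
  (m : {set 'I_n} -> IV R) (F : IV R -> IV R -> IV R)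
  (G : ('I_n -> IV R) -> IV R) : Prop :=
  forall (X : 'I_n -> IV R) (s1 s2 : {perm 'I_n}),
    sorted_by le X s1 -> sorted_by le X s2 ->
    G (fun i => F (X (s1 i)) (m (Eset s1 i))) =
    G (fun i => F (X (s2 i)) (m (Eset s2 i))).

From HB Require Import structures.
From mathcomp Require Import all_boot all_order all_algebra all_fingroup.
From mathcomp Require Import reals.
Set Implicit Arguments. Unset Strict Implicit. Unset Printing Implicit Defensive.
Import Order.TTheory GRing.Theory Num.Theory.

(* For a sorted permutation s, ties among the X_i make E_{s(i)} depend on s,
   but E_{s(i)} is always contained in the upper set {j | X_{s(i)} <= X_j},
   with equality at the first index i carrying a given value.  Hence, for F
   and m monotone, the maximum of F(X_{s(i)}, m(E_{s(i)})) equals the maximum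
   over k of F(X_k, m{j | X_k <= X_j}), which does not mention s.  For
   G = f o Proj_1, the first term is X_{s(1)} /\ m(N) = X_{s(1)}, the least
   of the X_i, again independent of s. *)

Lemma WDS_comp (R : realType) (le : IV R -> IV R -> bool) n
    (m : {set 'I_n} -> IV R) F G (f : IV R -> IV R) :
  WDS le m F G -> WDS le m F (fun X => f (G X)).
Proof. by move=> wds X s1 s2 s1X s2X; rewrite (wds X s1 s2). Qed.

Section AdmissibleOrder.
Variables (R : realType) (le : IV R -> IV R -> bool).
Hypothesis hle : admissible le.

Lemma adm_refl X : le X X. Proof. by case: hle. Qed.

Lemma adm_anti X Y : le X Y -> le Y X -> X = Y.
Proof. by case: hle => _ anti _ _ _; apply: anti. Qed.

Lemma adm_trans X Y Z : le X Y -> le Y Z -> le X Z.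
Proof. by case: hle => _ _ trans _ _; apply: trans. Qed.

Lemma adm_total X Y : le X Y || le Y X. Proof. by case: hle. Qed.

Lemma adm_spo X Y : le_spo X Y -> le X Y. Proof. by case: hle => _ _ _ _; apply. Qed.

Lemma iv0_min X : le (iv0 R) X.
Proof.
apply: adm_spo; case: X => a b abP; have /andP[/andP[a_ge0 ab] _] := abP.
by split => //=; apply: le_trans a_ge0 ab.
Qed.

Lemma iv1_max X : le X (iv1 R).
Proof.
apply: adm_spo; case: X => a b abP; have /andP[/andP[_ ab] b_le1] := abP.
by split => //=; apply: le_trans ab b_le1.
Qed.

Lemma ivmin_monor X Y Z : le Y Z -> le (ivmin le X Y) (ivmin le X Z).
Proof.
rewrite /ivmin => YZ; case: ifP => XY; case: ifP => XZ.
- exact: adm_refl.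
- by rewrite (adm_trans XY YZ) in XZ.
- by move: (adm_total X Y); rewrite XY.
- exact: YZ.
Qed.

Lemma ivmin1 X : ivmin le X (iv1 R) = X.
Proof. by rewrite /ivmin iv1_max. Qed.

Lemma ivmax_ubl X Y : le X (ivmax le X Y).
Proof. by rewrite /ivmax; case: ifP => // _; apply: adm_refl. Qed.

Lemma ivmax_ubr X Y : le Y (ivmax le X Y).
Proof.
rewrite /ivmax; case: ifP => [_ | XY]; first exact: adm_refl.
by move: (adm_total X Y); rewrite XY.
Qed.

Lemma ivmaxn_ub n (X : 'I_n -> IV R) i : le (X i) (ivmaxn le X).
Proof.
rewrite /ivmaxn; have : i \in enum 'I_n by rewrite mem_enum.
elim: (enum 'I_n) => //= j s IHs; rewrite in_cons.
case/orP=> [/eqP<- | /IHs Xi_le]; first exact: ivmax_ubl.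
exact: adm_trans Xi_le (ivmax_ubr _ _).
Qed.

Lemma ivmaxn_lub n (X : 'I_n -> IV R) Y :
  (forall i, le (X i) Y) -> le (ivmaxn le X) Y.
Proof.
move=> X_le; rewrite /ivmaxn; elim: (enum 'I_n) => /= [|j s IHs].
  exact: iv0_min.
by rewrite /ivmax; case: ifP.
Qed.

Definition upset n (X : 'I_n -> IV R) k : {set 'I_n} := [set j | le (X k) (X j)].

Section SortedPermutation.
Variables (n : nat) (X : 'I_n -> IV R) (s : {perm 'I_n}).
Hypothesis sortedXs : sorted_by le X s.

Lemma Eset_sub_upset i : Eset s i \subset upset X (s i).
Proof.
apply/subsetP => x /imsetP[j]; rewrite inE => ij ->.
by rewrite inE; apply: sortedXs.
Qed.

Lemma sorted_first_le i k : val i = 0%N -> le (X (s i)) (X k).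
Proof. by move=> i0; rewrite -(permKV s k); apply: sortedXs; rewrite i0. Qed.

Lemma Eset_first_value k :
  exists i, X (s i) = X k /\ Eset s i = upset X k.
Proof.
have Xk_le : le (X k) (X (s (s^-1 k)%g)) by rewrite permKV adm_refl.
have [i Xk_le_Xsi i_min] :=
  arg_minnP (P := fun i => le (X k) (X (s i))) (fun i : 'I_n => val i) Xk_le.
exists i; split.
  apply: adm_anti Xk_le_Xsi; rewrite -[in X in le _ X](permKV s k).
  exact/sortedXs/i_min/Xk_le.
apply/setP => j; rewrite inE; apply/imsetP/idP => [[j' ij' ->] | Xk_le_Xj].
  by apply: adm_trans Xk_le_Xsi _; apply: sortedXs; rewrite inE in ij'.
exists (s^-1 j)%g; last by rewrite permKV.
by rewrite inE; apply: i_min; rewrite permKV.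
Qed.

Lemma ivmaxn_sorted (F : IV R -> IV R -> IV R) (m : {set 'I_n} -> IV R) :
  (forall Y Z W, le Z W -> le (F Y Z) (F Y W)) ->
  (forall A B : {set 'I_n}, A \subset B -> le (m A) (m B)) ->
  ivmaxn le (fun i => F (X (s i)) (m (Eset s i))) =
  ivmaxn le (fun k => F (X k) (m (upset X k))).
Proof.
move=> F_monor m_mono; apply: adm_anti; apply: ivmaxn_lub.
- move=> i; apply: adm_trans (ivmaxn_ub _ (s i)).
  exact/F_monor/m_mono/Eset_sub_upset.
- move=> k; have [i [<- <-]] := Eset_first_value k.
  exact: (ivmaxn_ub (fun i => F (X (s i)) (m (Eset s i)))).
Qed.

End SortedPermutation.

Lemma WDS_ivmaxn n (F : IV R -> IV R -> IV R) (m : {set 'I_n} -> IV R) :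
  (forall X Y Z, le Y Z -> le (F X Y) (F X Z)) ->
  (forall A B : {set 'I_n}, A \subset B -> le (m A) (m B)) ->
  WDS le m F (@ivmaxn R le n).
Proof.
move=> F_monor m_mono X s1 s2 s1X s2X.
by rewrite (ivmaxn_sorted s1X F_monor m_mono) (ivmaxn_sorted s2X F_monor m_mono).
Qed.

Lemma Eset_first n (s : {perm 'I_n}) i : val i = 0%N -> Eset s i = setT.
Proof.
move=> i0; apply/setP => j; rewrite inE; apply/imsetP.
by exists (s^-1 j)%g; rewrite ?permKV // inE i0.
Qed.

Lemma WDS_ivmin_Proj1 n (m : {set 'I_n} -> IV R) :
  m setT = iv1 R -> WDS le m (ivmin le) (@Proj1 R n).
Proof.
move=> mT X s1 s2 s1X s2X; rewrite /Proj1.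
case: pickP => [i /eqP i0 | //]; rewrite !Eset_first // mT !ivmin1.
by apply: adm_anti; apply: sorted_first_le.
Qed.

End AdmissibleOrder.

Theorem corollary1 (R : realType) (n : nat) (hn : (1 <= n)%N)
  (le : IV R -> IV R -> bool) (hle : admissible le) :
  (* (i) *)
  (forall F : IV R -> IV R -> IV R,
     (forall X Y Z, le Y Z -> le (F X Y) (F X Z)) ->
     forall m : {set 'I_n} -> IV R, iv_fuzzy_measure le m ->
       WDS le m F (@ivmaxn R le n)) /\
  (* (ii) *)
  (forall G : ('I_n -> IV R) -> IV R,
     (exists f : IV R -> IV R,
        G = (fun X => f (Proj1 X)) \/ G = (fun X => f (ivmaxn le X))) ->
     forall m : {set 'I_n} -> IV R, iv_fuzzy_measure le m ->
       WDS le m (ivmin le) G) /\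
  (* (iii) *)
  (forall m : {set 'I_n} -> IV R, iv_fuzzy_measure le m ->
     WDS le m (ivmin le) (@ivmaxn R le n)).
Proof.
have WDS_min_max m : iv_fuzzy_measure le m -> WDS le m (ivmin le) (@ivmaxn R le n).
  by case=> _ _ m_mono; apply: WDS_ivmaxn => //; apply: ivmin_monor.
split; [|split] => //.
  by move=> F F_monor m [_ _ m_mono]; apply: WDS_ivmaxn.
move=> G [f [->|->]] m mP; apply: WDS_comp; last exact: WDS_min_max.
by case: mP => _ mT _; apply: WDS_ivmin_Proj1.
Qed.
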